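(* Let $\mathcal{D}\in\mathbb{C}^{\mathbf{N}(s)\times\mathbf{N}(s)}$ with $\mathrm{ind}(\mathcal{D})=k$. Then (i) $\mathcal{D}^{\mathrm D,\dagger}*_s\mathcal{D}=\mathcal{D}^{c,\dagger}*_s\mathcal{D}$ if and only if $\mathscr{R}(\mathcal{D}^k)\subseteq\mathscr{R}(\mathcal{D}^\dagger)$; (ii) $\mathcal{D}*_s\mathcal{D}^{\dagger,\mathrm D}=\mathcal{D}*_s\mathcal{D}^{c,\dagger}$ if and only if $\mathcal{D}^k=\mathcal{D}^{k+1}*_s\mathcal{D}^\dagger$.
   Context: For positive integers $N_1,\dots,N_s$ write $\mathbf{N}(s)=N_1\times\cdots\times N_s$. For $\mathcal{A}\in\mathbb{C}^{\mathbf{I}(m)\times\mathbf{K}(p)}$ and $\mathcal{B}\in\mathbb{C}^{\mathbf{K}(p)\times\mathbf{J}(n)}$ the Einstein product is the tensor $\mathcal{A}*_p\mathcal{B}\in\mathbb{C}^{\mathbf{I}(m)\times\mathbf{J}(n)}$ with entries $(\mathcal{A}*_p\mathcal{B})_{i_1\dots i_m j_1\dots j_n}=\sum_{k_1,\dots,k_p}\mathcal{A}_{i_1\dots i_m k_1\dots k_p}\mathcal{B}_{k_1\dots k_p j_1\dots j_n}$; the case $n=0$ (so $\mathcal{B}\in\mathbb{C}^{\mathbf{K}(p)}$) is allowed. For $\mathcal{D}\in\mathbb{C}^{\mathbf{N}(s)\times\mathbf{N}(s)}$, powers are $\mathcal{D}^0=\mathcal{I}$, $\mathcal{D}^{j+1}=\mathcal{D}*_s\mathcal{D}^j$,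 where $\mathcal{I}$ is the identity tensor with entries $\mathcal{I}_{i_1\dots i_s j_1\dots j_s}=\prod_{t=1}^s\delta_{i_tj_t}$. The conjugate transpose $\mathcal{A}^*$ of $\mathcal{A}\in\mathbb{C}^{\mathbf{M}(m)\times\mathbf{N}(n)}$ has entries $(\mathcal{A}^* )_{j_1\dots j_n i_1\dots i_m}=\overline{\mathcal{A}_{i_1\dots i_m j_1\dots j_n}}$. For $\mathcal{A}\in\mathbb{C}^{\mathbf{M}(m)\times\mathbf{N}(n)}$, $\mathscr{R}(\mathcal{A})=\{\mathcal{A}*_n\mathcal{E}:\mathcal{E}\in\mathbb{C}^{\mathbf{N}(n)}\}$. The index $\mathrm{ind}(\mathcal{D})$ of $\mathcal{D}\in\mathbb{C}^{\mathbf{N}(s)\times\mathbf{N}(s)}$ is the smallest nonnegative integer $k$ with $\dim\mathscr{R}(\mathcal{D}^k)=\dim\mathscr{R}(\mathcal{D}^{k+1})$. The Moore–Penrose inverse $\mathcal{D}^\dagger$ of $\mathcal{D}\in\mathbb{C}^{\mathbf{N}(s)\times\mathbf{N}(s)}$ is the unique $\mathcal{Y}$ with $\mathcal{D}*_s\mathcal{Y}*_s\mathcal{D}=\mathcal{D}$, $\mathcal{Y}*_s\mathcal{D}*_s\mathcal{Y}=\mathcal{Y}$, $(\mathcal{D}*_s\mathcal{Y})^*=\mathcal{D}*_s\mathcal{Y}$, $(\mathcal{Y}*_s\mathcal{D})^*=\mathcal{Y}*_s\mathcal{D}$. With $k=\mathrm{ind}(\mathcal{D})$, the Drazin inverse $\mathcal{D}^{\mathrm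 D}$ is the unique $\mathcal{Y}$ with $\mathcal{Y}*_s\mathcal{D}^{k+1}=\mathcal{D}^k$, $\mathcal{Y}*_s\mathcal{D}*_s\mathcal{Y}=\mathcal{Y}$, $\mathcal{D}*_s\mathcal{Y}=\mathcal{Y}*_s\mathcal{D}$. Composite inverses: $\mathcal{D}^{\mathrm D,\dagger}=\mathcal{D}^{\mathrm D}*_s\mathcal{D}*_s\mathcal{D}^\dagger$ (DMP), $\mathcal{D}^{\dagger,\mathrm D}=\mathcal{D}^\dagger*_s\mathcal{D}*_s\mathcal{D}^{\mathrm D}$ (MPD), $\mathcal{D}^{c,\dagger}=\mathcal{D}^\dagger*_s\mathcal{D}*_s\mathcal{D}^{\mathrm D}*_s\mathcal{D}*_s\mathcal{D}^\dagger$ (CMP). *)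

From HB Require Import structures.
From mathcomp Require Import all_boot all_order all_algebra.
From mathcomp Require Import complex.
From mathcomp Require Import reals.
Set Implicit Arguments. Unset Strict Implicit. Unset Printing Implicit Defensive.
Import Order.TTheory GRing.Theory Num.Theory.
Local Open Scope ring_scope.

Section Tensors.
Variable R : realType.
Local Notation C := (R[i]).

(* Multi-indices (i_1,...,i_s) with 1 <= i_t <= N_t (0-based here). *)
Definition idx (s : nat) (N : 'I_s -> nat) := {dffun forall t : 'I_s, 'I_(N t)}.

Definition tensor s (N : 'I_s -> nat) := idx N -> idx N -> C.
Definition vtensor s (N : 'I_s -> nat) := {ffun idx N -> C^o}.

Variables (s : nat) (N : 'I_s -> nat).

Definition eprod (A B : tensor N) : tensor N :=
  fun i j => \sum_(k : idx N) A i k * B k j.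
Definition eprodv (A : tensor N) (E : vtensor N) : vtensor N :=
  [ffun i => \sum_(k : idx N) A i k * E k].

Definition eid : tensor N := fun i j => (i == j)%:R.

Fixpoint epow (D : tensor N) (j : nat) : tensor N :=
  match j with 0 => eid | j'.+1 => eprod D (epow D j') end.

Definition ctrans (A : tensor N) : tensor N := fun j i => (A i j)^*.

Definition trange (A : tensor N) (X : vtensor N) : Prop :=
  exists E : vtensor N, X = eprodv A E.

Definition trange_vs (A : tensor N) : {vspace vtensor N} :=
  limg (linfun (eprodv A)).

Definition tdim (A : tensor N) : nat := \dim (trange_vs A).

Definition is_index (D : tensor N) (k : nat) : Prop :=
  tdim (epow D k) = tdim (epow D k.+1) /\
  forall j, (j < k)%N -> tdim (epow D j) <> tdim (epow D j.+1).

Definition is_MP (D Y : tensor N) : Prop :=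
  [/\ eprod (eprod D Y) D = D, eprod (eprod Y D) Y = Y,
      ctrans (eprod D Y) = eprod D Y & ctrans (eprod Y D) = eprod Y D].

Definition is_Drazin (D Y : tensor N) (k : nat) : Prop :=
  [/\ eprod Y (epow D k.+1) = epow D k, eprod (eprod Y D) Y = Y
    & eprod D Y = eprod Y D].

(* Composite inverses, given the MP inverse Dd and Drazin inverse DD *)
Definition DMP (D Dd DD : tensor N) : tensor N := eprod (eprod DD D) Dd.
Definition MPD (D Dd DD : tensor N) : tensor N := eprod (eprod Dd D) DD.
Definition CMP (D Dd DD : tensor N) : tensor N :=
  eprod (eprod (eprod (eprod Dd D) DD) D) Dd.

End Tensors.

(* Only the inner-inverse identities D Y D = D and Y D Y = Y of the
   Moore-Penrose inverse Y and the defining identities of the Drazin inverse Z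
   are needed.  With D Y D = D the four composite products collapse:
   D^{D,+} D = Z D,  D^{c,+} D = (Y D) Z D,  D D^{+,D} = D Z  and
   D D^{c,+} = D Z (D Y).  Since Z D = D Z and (Z D) Z = Z,
   an equation P (Z D) = Z D amounts to P Z = Z, and since Z = D^k Z^{k+1}
   and D^k = Z D^{k+1}, this amounts to P D^k = D^k (and symmetrically on the
   right).  Finally R(D^k) is contained in R(Y) iff D^k factors through Y,
   iff (Y D) D^k = D^k because Y D Y = Y. *)
From mathcomp Require Import all_boot all_order all_algebra.
From mathcomp Require Import complex.
From mathcomp Require Import reals.
From Stdlib Require Import FunctionalExtensionality.
Import GRing.Theory.
Local Open Scope ring_scope.
Set Implicit Arguments. Unset Strict Implicit.

Section TensorAlgebra.
Variables (R : realType) (s : nat) (N : 'I_s -> nat).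
Local Notation T := (tensor R N).

Lemma tensorP (A B : T) : (forall i j, A i j = B i j) -> A = B.
Proof.
move=> eqAB; apply: functional_extensionality => i.
exact: functional_extensionality.
Qed.

Lemma eprodA (A B C : T) : eprod (eprod A B) C = eprod A (eprod B C).
Proof.
apply: tensorP => i j; rewrite /eprod.
under eq_bigr => k _ do rewrite big_distrl /=.
rewrite exchange_big /=; apply: eq_bigr => l _.
by rewrite big_distrr /=; apply: eq_bigr => k _; rewrite mulrA.
Qed.

Lemma eprod1l (A : T) : eprod (@eid R s N) A = A.
Proof.
apply: tensorP => i j; rewrite /eprod /eid (bigD1 i) //= eqxx mul1r big1 ?addr0 //.
by move=> k; rewrite eq_sym => /negbTE ->; rewrite mul0r.
Qed.

Lemma eprod1r (A : T) : eprod A (@eid R s N) = A.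
Proof.
apply: tensorP => i j; rewrite /eprod /eid (bigD1 j) //= eqxx mulr1 big1 ?addr0 //.
by move=> k /negbTE ->; rewrite mulr0.
Qed.

Lemma epowSr (A : T) m : epow A m.+1 = eprod (epow A m) A.
Proof.
elim: m => [|m IHm]; first by rewrite /= eprod1l eprod1r.
by rewrite -[LHS]/(eprod A (epow A m.+1)) {1}IHm -eprodA.
Qed.

Lemma epow_comm (A B : T) m : eprod A B = eprod B A ->
  eprod (epow A m) B = eprod B (epow A m).
Proof.
move=> AB; elim: m => [|m IHm] /=; first by rewrite eprod1l eprod1r.
by rewrite eprodA IHm -eprodA AB eprodA.
Qed.

Lemma eprodvA (A B : T) (E : vtensor R N) :
  eprodv (eprod A B) E = eprodv A (eprodv B E).
Proof.
apply/ffunP => i; rewrite !ffunE /eprod.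
under eq_bigr => k _ do rewrite big_distrl /=.
rewrite exchange_big /=; apply: eq_bigr => l _.
by rewrite ffunE big_distrr /=; apply: eq_bigr => k _; rewrite mulrA.
Qed.

Definition unit_vtensor (j : idx N) : vtensor R N := [ffun i => (i == j)%:R].

Lemma eprodv_unit (A : T) j i : eprodv A (unit_vtensor j) i = A i j.
Proof.
rewrite ffunE (bigD1 j) //= ffunE eqxx mulr1 big1 ?addr0 //.
by move=> k /negbTE; rewrite ffunE => ->; rewrite mulr0.
Qed.

Lemma trange_subP (A B : T) :
  (forall X, trange A X -> trange B X) <-> exists W, A = eprod B W.
Proof.
split=> [AB | [W ->] _ [E ->]]; last by exists (eprodv W E); rewrite eprodvA.
have [F AF] : exists F : idx N -> vtensor R N,
    forall j, eprodv A (unit_vtensor j) = eprodv B (F j).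
  apply: (@fin_all_exists _ (fun=> vtensor R N)
    (fun j F => eprodv A (unit_vtensor j) = eprodv B F)) => j.
  exact: AB _ (ex_intro _ (unit_vtensor j) erefl).
exists (fun i j => F j i); apply: tensorP => i j.
by rewrite -eprodv_unit AF ffunE.
Qed.

Lemma trange_sub_inner (D Y A : T) : eprod (eprod Y D) Y = Y ->
  (forall X, trange A X -> trange Y X) <-> eprod Y (eprod D A) = A.
Proof.
move=> YDY; rewrite trange_subP; split=> [[W ->] | YDA]; last by exists (eprod D A).
by rewrite -!eprodA YDY.
Qed.

Section Drazin.
Variables (D Z : T) (k : nat).
Hypotheses (ZDk : eprod Z (epow D k.+1) = epow D k)
  (ZDZ : eprod (eprod Z D) Z = Z) (DZ_comm : eprod D Z = eprod Z D).

Lemma drazin_powl : eprod (epow D k.+1) Z = epow D k.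
Proof. by rewrite epow_comm. Qed.

Lemma drazin_pow m : Z = eprod (epow Z m.+1) (epow D m).
Proof.
elim: m => [|m IHm]; first by rewrite /= !eprod1r.
have ZZD_comm : eprod Z (eprod Z D) = eprod (eprod Z D) Z by rewrite eprodA DZ_comm.
rewrite (epowSr Z m.+1) [epow D m.+1]/= eprodA -(eprodA Z D) -eprodA.
by rewrite (epow_comm _ ZZD_comm) eprodA -IHm ZDZ.
Qed.

Lemma drazin_pow_comm : Z = eprod (epow D k) (epow Z k.+1).
Proof. by rewrite {1}(drazin_pow k) epow_comm // epow_comm. Qed.

Lemma drazin_fixl P : eprod P Z = Z <-> eprod P (epow D k) = epow D k.
Proof.
split=> PX; last by rewrite drazin_pow_comm -eprodA PX.
by rewrite -ZDk -eprodA PX.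
Qed.

Lemma drazin_fixr P : eprod Z P = Z <-> eprod (epow D k) P = epow D k.
Proof.
split=> XP; last by rewrite (drazin_pow k) eprodA XP.
by rewrite -drazin_powl eprodA XP.
Qed.

Lemma drazin_proj_fixl P : eprod P (eprod Z D) = eprod Z D <-> eprod P Z = Z.
Proof.
split=> [PZD | PZ]; last by rewrite -eprodA PZ.
by rewrite -{1}ZDZ -eprodA PZD ZDZ.
Qed.

Lemma drazin_proj_fixr P : eprod (eprod D Z) P = eprod D Z <-> eprod Z P = Z.
Proof.
have ZDZ' : eprod Z (eprod D Z) = Z by rewrite -eprodA.
split=> [DZP | ZP]; last by rewrite eprodA ZP.
by rewrite -{1}ZDZ' eprodA DZP ZDZ'.
Qed.

End Drazin.
End TensorAlgebra.

Lemma eq_sym_iff (T : Type) (x y : T) : x = y <-> y = x.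
Proof. by split=> /esym. Qed.

Theorem mainTheorem8 (R : realType) (s : nat) (N : 'I_s -> nat)
  (D Dd DD : tensor R N) (k : nat) :
  is_index D k -> is_MP D Dd -> is_Drazin D DD k ->
  (eprod (DMP D Dd DD) D = eprod (CMP D Dd DD) D <->
     (forall X, trange (epow D k) X -> trange Dd X)) /\
  (eprod D (MPD D Dd DD) = eprod D (CMP D Dd DD) <->
     epow D k = eprod (epow D k.+1) Dd).
Proof.
move=> _ [DYD YDY _ _] [ZDk ZDZ DZ_comm].
have DYDr : eprod D (eprod Dd D) = D by rewrite -eprodA DYD.
have DYDl X : eprod D (eprod Dd (eprod D X)) = eprod D X by rewrite -2!eprodA DYD.
split.
- have -> : eprod (DMP D Dd DD) D = eprod DD D by rewrite /DMP !eprodA DYDr.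
  have -> : eprod (CMP D Dd DD) D = eprod (eprod Dd D) (eprod DD D).
    by rewrite /CMP !eprodA DYDr.
  rewrite (trange_sub_inner _ YDY) -(eprodA Dd D).
  apply: (iff_trans (eq_sym_iff _ _)).
  apply: (iff_trans (drazin_proj_fixl ZDZ (eprod Dd D))).
  exact: (drazin_fixl ZDk ZDZ DZ_comm (eprod Dd D)).
- have -> : eprod D (MPD D Dd DD) = eprod D DD by rewrite /MPD -eprodA DYDr.
  have -> : eprod D (CMP D Dd DD) = eprod (eprod D DD) (eprod D Dd).
    by rewrite /CMP !eprodA DYDl.
  rewrite epowSr (eprodA (epow D k)).
  apply: (iff_trans (eq_sym_iff _ _)).
  apply: (iff_trans (drazin_proj_fixr ZDZ (eprod D Dd))).
  apply: (iff_trans (drazin_fixr ZDk ZDZ DZ_comm (eprod D Dd))).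
  exact: eq_sym_iff.
Qed.
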